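(* Let $N\ge1$, let $\phi:H_0(S_N)\to M_N$ be the quotient morphism sending $\pi_i\mapsto\pi_i$, where $M_N$ is the quotient of $H_0(S_N)$ by the relations $\pi_i\pi_{i+1}\pi_i=\pi_i\pi_{i+1}$ ($1\le i\le N-2$), and let $\Psi$ be the automorphism of $H_0(S_N)$ with $\Psi(\pi_i)=\pi_{N-i}$. For every $m\in M_N$ let $G_m=\{w\in S_N: \phi(\Psi(\pi_w))=m\}$. Every nonempty $G_m$ contains a unique $[321]$-avoiding permutation, which is of minimal length in $G_m$, and a unique $[312]$-avoiding permutation, which is of maximal length in $G_m$.
   Context: $S_N$ is generated by simple transpositions $s_1,\dots,s_{N-1}$; permutations are in one-line notation and composed as functions, $(uv)(j)=u(v(j))$, so $xs_i$ swaps the entries in positions $i,i+1$. $\operatorname{len}$ is Coxeter length (number of inversions). $H_0(S_N)$ is generated by $\pi_1,\dots,\pi_{N-1}$ with relations $\pi_i^2=\pi_i$, $\pi_i\pi_j=\pi_j\pi_i$ for $|i-j|\ge2$, $\pi_i\pi_{i+1}\pi_i=\pi_{i+1}\pi_i\pi_{i+1}$; $\pi_w:=\pi_{i_1}\cdots\pi_{i_k}$ for any reduced word $w=s_{i_1}\cdots s_{i_k}$, giving a bijection $S_N\to H_0(S_N)$. A permutation contains a pattern $\sigma\in S_k$ if some subsequence of its one-line notation is in the same relative order as $\sigma$; otherwise it avoids $\sigma$. *)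

From mathcomp Require Import all_boot all_fingroup.
Set Implicit Arguments. Unset Strict Implicit. Unset Printing Implicit Defensive.
Import GroupScope.

(* Throughout, N = n.+1 (so N >= 1); S_N is 'S_(n.+1), positions/values are
   0-indexed ordinals 'I_(n.+1) (position j here = position j+1 in the paper).
   Words are sequences of letters i with 1 <= i <= N-1, letter i standing for
   s_i (resp. pi_i). *)

Definition valid_letter (n i : nat) : bool := (0 < i) && (i <= n).

Definition sgen (n i : nat) : 'S_n.+1 := tperm (inord i.-1) (inord i).

(* function composition (u v)(j) = u (v j); mathcomp's (v * u) x = u (v x) *)
Definition comp (n : nat) (u v : 'S_n.+1) : 'S_n.+1 := v * u.

Definition wordperm (n : nat) (l : seq nat) : 'S_n.+1 :=
  foldr (fun i w => comp (sgen n i) w) 1 l.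

(* Coxeter length = number of inversions *)
Definition len (n : nat) (w : 'S_n.+1) : nat :=
  #|[set p : 'I_n.+1 * 'I_n.+1 | (p.1 < p.2) && (w p.2 < w p.1)]|.

Definition reduced_word (n : nat) (l : seq nat) (w : 'S_n.+1) : Prop :=
  [/\ all (valid_letter n) l, wordperm n l = w & size l = len w].

Definition contains_pattern (n : nat) (w : 'S_n.+1) (sigma : seq nat) : Prop :=
  exists idx : seq 'I_n.+1,
    [/\ size idx = size sigma, sorted ltn (map val idx) &
        forall a b, a < size sigma -> b < size sigma ->
          (w (nth ord0 idx a) < w (nth ord0 idx b)) = (nth 0 sigma a < nth 0 sigma b)].

Definition avoids (n : nat) (w : 'S_n.+1) (sigma : seq nat) : Prop :=
  ~ contains_pattern w sigma.

(* The monoid congruence on words presenting M_N: the 0-Hecke relations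
   together with pi_i pi_{i+1} pi_i = pi_i pi_{i+1}. *)
Inductive Mcong (n : nat) : seq nat -> seq nat -> Prop :=
| Mc_refl u : Mcong n u u
| Mc_sym u v : Mcong n u v -> Mcong n v u
| Mc_trans u v w : Mcong n u v -> Mcong n v w -> Mcong n u w
| Mc_ctx a b u v : Mcong n u v -> Mcong n (a ++ u ++ b) (a ++ v ++ b)
| Mc_idem i : valid_letter n i -> Mcong n [:: i; i] [:: i]
| Mc_comm i j : valid_letter n i -> valid_letter n j -> (i.+2 <= j) || (j.+2 <= i) ->
    Mcong n [:: i; j] [:: j; i]
| Mc_braid i : valid_letter n i -> valid_letter n i.+1 ->
    Mcong n [:: i; i.+1; i] [:: i.+1; i; i.+1]
| Mc_M i : valid_letter n i -> valid_letter n i.+1 ->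
    Mcong n [:: i; i.+1; i] [:: i; i.+1].

Definition Psi_word (n : nat) (l : seq nat) : seq nat := map (fun i => n.+1 - i) l.

(* w \in G_m, where m \in M_N is represented by the word m:
   phi(Psi(pi_w)) = m, pi_w computed from a reduced word of w *)
Definition inG (n : nat) (m : seq nat) (w : 'S_n.+1) : Prop :=
  exists l, reduced_word l w /\ Mcong n (Psi_word n l) m.

From mathcomp Require Import all_boot all_fingroup zify.
Set Implicit Arguments. Unset Strict Implicit. Unset Printing Implicit Defensive.

(* M_N acts on {0, ..., n} by letting pi_i send i to i - 1 and fix every other
   point; the defining relations hold for this action and, conversely, every
   word is congruent to a normal form [nf] determined by its action, so the
   action is faithful. For a reduced word of w, the word Psi(pi_w) acts by
   y |-> n - pmax w (n - y), where [pmax w y] is the largest of the first y + 1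
   entries of w: the classes G_m are the classes of permutations with the same
   prefix maxima.
   In such a class, every inversion of a 321-avoiding permutation starts at a
   left-to-right maximum, and every pair y < z of a 312-avoiding permutation
   with w z below the prefix maximum at y is an inversion; the numbers of pairs
   of both kinds are class invariants, which gives the two length bounds.
   Two avoiders of the same pattern in a class coincide at their first
   difference, and an element maximizing (resp. minimizing) sum_x x * w x
   avoids 321 (resp. 312), because transposing the entries "2" and "1"
   (resp. "1" and "2") of a pattern keeps the prefix maxima. *)

Definition hecke_act (i y : nat) : nat := if y == i then i.-1 else y.

Lemma hecke_act_id i y : y != i -> hecke_act i y = y.
Proof. by rewrite /hecke_act => /negbTE ->. Qed.

Definition word_act (W : seq nat) (y : nat) : nat := foldr hecke_act y W.

Lemma word_act_cat (U V : seq nat) y : word_act (U ++ V) y = word_act U (word_act V y).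
Proof. exact: foldr_cat. Qed.

Lemma word_act_le W y : word_act W y <= y.
Proof. by elim: W => //= i W; rewrite /hecke_act; case: eqP; lia. Qed.

Lemma word_act_homo W : {homo word_act W : y z / y <= z}.
Proof.
move=> y z; elim: W => //= i W IH /IH; rewrite /hecke_act.
by case: eqP; case: eqP; lia.
Qed.

Section Congruence.

Variable n : nat.

Lemma Mcong_word_act u v : Mcong n u v -> word_act u =1 word_act v.
Proof.
elim=> {u v} [//|u v _ IH y|u v w _ IH1 _ IH2 y|a b u v _ IH y|i|i j _ _|i|i] /=.
- by rewrite IH.
- by rewrite IH1 IH2.
- by rewrite !word_act_cat IH.
all: rewrite /eqfun /valid_letter /word_act /hecke_act => * /=; by do ! case: eqP; lia.
Qed.

Lemma Mcong_cat u u' v v' : Mcong n u u' -> Mcong n v v' -> Mcong n (u ++ v) (u' ++ v').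
Proof.
move=> Hu Hv; apply: (@Mc_trans _ _ (u' ++ v)); first exact: (Mc_ctx [::] v Hu).
by have := Mc_ctx u' [::] Hv; rewrite !cats0.
Qed.

Lemma Mcong_cons i u v : Mcong n u v -> Mcong n (i :: u) (i :: v).
Proof. exact: Mcong_cat (Mc_refl n [:: i]). Qed.

Lemma Mcong_commute i u : valid_letter n i -> all (valid_letter n) u ->
  all (fun j => (i.+2 <= j) || (j.+2 <= i)) u -> Mcong n (i :: u) (u ++ [:: i]).
Proof.
move=> Hi; elim: u => [|j u IH] /=; first by move=> *; apply: Mc_refl.
case/andP=> Hj Hu /andP[Hij Hfar]; apply: (@Mc_trans _ _ (j :: i :: u)).
  exact: Mcong_cat (Mc_comm Hi Hj Hij) (Mc_refl n u).
exact: Mcong_cons (IH Hu Hfar).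
Qed.

Lemma all_valid_iota a k : 0 < a -> a + k <= n.+1 -> all (valid_letter n) (iota a k).
Proof. by move=> *; apply/allP => j; rewrite mem_iota /valid_letter; lia. Qed.

Lemma Mcong_absorbl i a k : 0 < a -> a + k <= n.+1 -> a <= i < a + k ->
  Mcong n (i :: iota a k) (iota a k).
Proof.
elim: k a => [|k IH] a a_gt0 ak_le i_in /=; first lia.
have Va : valid_letter n a by rewrite /valid_letter; lia.
case: (ltngtP i a.+1) => [i_lt|i_gt|i_eq]; last subst i.
- have -> : i = a by lia.
  exact: Mcong_cat (Mc_idem Va) (Mc_refl n (iota a.+1 k)).
- apply: (@Mc_trans _ _ (a :: i :: iota a.+1 k)); last by apply/Mcong_cons/IH; lia.
  have Vi : valid_letter n i by rewrite /valid_letter; lia.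
  have far : (i.+2 <= a) || (a.+2 <= i) by lia.
  exact: Mcong_cat (Mc_comm Vi Va far) (Mc_refl n (iota a.+1 k)).
- case: k {IH} ak_le i_in => [|k] ak_le i_in /=; first lia.
  have Va1 : valid_letter n a.+1 by rewrite /valid_letter; lia.
  apply: (@Mc_trans _ _ ([:: a; a.+1; a] ++ iota a.+2 k)).
    exact: Mcong_cat (Mc_sym (Mc_braid Va Va1)) (Mc_refl n (iota a.+2 k)).
  exact: Mcong_cat (Mc_M Va Va1) (Mc_refl n (iota a.+2 k)).
Qed.

Lemma Mcong_absorbr i a k : 0 < a -> a + k <= n.+1 -> a <= i < a + k ->
  Mcong n (iota a k ++ [:: i]) (iota a k).
Proof.
elim: k a => [|k IH] a a_gt0 ak_le i_in /=; first lia.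
have Va : valid_letter n a by rewrite /valid_letter; lia.
case: (ltngtP i a) => [|i_gt|i_eq]; [lia| |subst i].
  by apply/Mcong_cons/IH; lia.
case: k {IH} ak_le i_in => [|k] ak_le i_in /=; first exact: Mc_idem.
have Va1 : valid_letter n a.+1 by rewrite /valid_letter; lia.
apply: (@Mc_trans _ _ ([:: a; a.+1; a] ++ iota a.+2 k)).
  apply/Mcong_cons/Mcong_cons/Mc_sym/Mcong_commute => //.
    by apply: all_valid_iota; lia.
  by apply/allP => j; rewrite mem_iota; lia.
exact: Mcong_cat (Mc_M Va Va1) (Mc_refl n (iota a.+2 k)).
Qed.

Definition block (a x : nat) : seq nat := iota a.+1 (x - a).

Fixpoint nf (g : nat -> nat) (x : nat) : seq nat :=
  if x is x'.+1 then block (g x) x ++ nf g x' else [::].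

Lemma eq_nf g g' x : (forall y, y <= x -> g y = g' y) -> nf g x = nf g' x.
Proof. by elim: x => //= x IH E; rewrite E ?IH // => y Hy; apply: E; lia. Qed.

Lemma nf_id x : nf id x = [::].
Proof. by elim: x => //= x ->; rewrite /block subnn. Qed.

Lemma nf_hecke_out g i x : (forall y, y <= x -> g y < i) ->
  nf (hecke_act i \o g) x = nf g x.
Proof.
by move=> g_lt; apply: eq_nf => y /g_lt; rewrite /= /hecke_act; case: eqP; lia.
Qed.

Lemma Mcong_nf_cons g i x : (forall y, g y <= y) -> {homo g : y z / y <= z} ->
  0 < i <= x -> x <= n -> Mcong n (i :: nf g x) (nf (hecke_act i \o g) x).
Proof.
move=> g_le g_homo; elim: x => [|x IH] i_in x_le /=; first lia.
have a_le : g x.+1 <= x.+1 := g_le _.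
case: (ltngtP (g x.+1) i) => [a_lt|a_gt|a_eq].
- rewrite hecke_act_id ?nf_hecke_out; last by rewrite neq_ltn a_lt.
    by apply: Mcong_cat (Mcong_absorbl _ _ _) (Mc_refl n _); lia.
  by move=> y y_le; have := g_homo _ _ (leqW y_le); lia.
- rewrite hecke_act_id; last by rewrite neq_ltn a_gt orbT.
  apply: (@Mc_trans _ _ ((block (g x.+1) x.+1 ++ [:: i]) ++ nf g x)).
    rewrite -cat_cons; apply: Mcong_cat (Mc_refl n _); apply: Mcong_commute.
    - by rewrite /valid_letter; lia.
    - by apply: all_valid_iota; lia.
    - by apply/allP => j; rewrite mem_iota; lia.
  by rewrite -catA; apply/Mcong_cat/IH; [exact: Mc_refl|lia|lia].
- have block_i : block (hecke_act i (g x.+1)) x.+1 = iota i (x.+2 - i).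
    by rewrite /hecke_act a_eq eqxx /block prednK; [congr iota|]; lia.
  rewrite block_i.
  have [i_eq|i_le] : i = x.+1 \/ i <= x by lia.
    rewrite nf_hecke_out; first by rewrite a_eq i_eq /block subnn subSnn; exact: Mc_refl.
    by move=> y y_le; have := g_le y; lia.
  have iota_i : iota i (x.+2 - i) = i :: block (g x.+1) x.+1.
    by rewrite /block a_eq -[x.+2 - i]prednK; [congr (_ :: iota _ _)|]; lia.
  apply: (@Mc_trans _ _ ((iota i (x.+2 - i) ++ [:: i]) ++ nf g x)).
    rewrite -cat_cons -iota_i; apply: Mcong_cat (Mc_refl n _).
    by apply/Mc_sym/Mcong_absorbr; lia.
  by rewrite -catA; apply/Mcong_cat/IH; [exact: Mc_refl|lia|lia].
Qed.

Lemma Mcong_nf W : all (valid_letter n) W -> Mcong n W (nf (word_act W) n).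
Proof.
elim: W => [|i W IH] /=; first by rewrite (eq_nf (g' := id)) // nf_id; constructor.
case/andP=> Vi VW; apply: Mc_trans (Mcong_cons i (IH VW)) _.
by apply: Mcong_nf_cons; [exact: word_act_le|exact: word_act_homo|move: Vi; rewrite /valid_letter|].
Qed.

Lemma Mcong_of_word_act W1 W2 : all (valid_letter n) W1 -> all (valid_letter n) W2 ->
  (forall y, y <= n -> word_act W1 y = word_act W2 y) -> Mcong n W1 W2.
Proof.
move=> V1 V2 E; apply: Mc_trans (Mcong_nf V1) _.
by rewrite (eq_nf E); apply/Mc_sym/Mcong_nf.
Qed.

End Congruence.

Section Permutations.

Variable n : nat.

Local Open Scope group_scope.

Lemma perm_val_inj (w : 'S_n.+1) (x y : 'I_n.+1) : (w x : nat) = w y -> x = y.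
Proof. by move/val_inj/perm_inj. Qed.

Lemma perm_attains (w : 'S_n.+1) v : v <= n -> exists p : 'I_n.+1, (w p : nat) = v.
Proof. by move=> v_le; exists (w^-1 (inord v)); rewrite permKV inordK. Qed.

Lemma ord_trichotomy (p q : 'I_n.+1) : [\/ p < q, q < p | p = q].
Proof. by case: ltngtP => [||/val_inj]; constructor. Qed.

Definition pmax (w : 'S_n.+1) (y : nat) : nat := \max_(z : 'I_n.+1 | z <= y) w z.

Lemma pmax_ub (w : 'S_n.+1) y (z : 'I_n.+1) : z <= y -> w z <= pmax w y.
Proof. by move=> z_le; rewrite /pmax (bigD1 z) ?leq_maxl. Qed.

Lemma pmax_attained (w : 'S_n.+1) y : exists2 z : 'I_n.+1, z <= y & (w z : nat) = pmax w y.
Proof.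
by rewrite /pmax (bigmax_eq_arg ord0) //; case: arg_maxnP => // z; exists z.
Qed.

Lemma pmax_char (w : 'S_n.+1) y P : (exists2 z : 'I_n.+1, z <= y & (w z : nat) = P) ->
  (forall z : 'I_n.+1, z <= y -> w z <= P) -> pmax w y = P.
Proof.
case=> z z_le <- w_le; apply/eqP; rewrite eqn_leq pmax_ub // andbT.
by apply/bigmax_leqP => x; apply: w_le.
Qed.

Lemma pmax_le (w : 'S_n.+1) y : pmax w y <= n.
Proof. by have [z _ <-] := pmax_attained w y; rewrite -ltnS. Qed.

Lemma pmax_full (w : 'S_n.+1) y : n <= y -> pmax w y = n.
Proof.
move=> y_ge; have [p wp] := perm_attains w (leqnn n).
by apply: pmax_char => [|z _]; [exists p; rewrite // -ltnS (leq_trans (ltn_ord p))|rewrite -ltnS].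
Qed.

Lemma pmax1 y : y <= n -> pmax 1 y = y.
Proof.
by move=> y_le; apply: pmax_char => [|z]; [exists (inord y); rewrite ?perm1 inordK|rewrite perm1].
Qed.

Lemma eq_pmaxP (u v : 'S_n.+1) :
  reflect (pmax u =1 pmax v) [forall y : 'I_n.+1, pmax u y == pmax v y].
Proof.
apply: (iffP forallP) => [E y|E y]; last by rewrite E.
have [y_le|y_gt] := leqP y n; last by rewrite !pmax_full 1?ltnW.
by have /eqP := E (inord y); rewrite inordK.
Qed.

Lemma sgenE i (x : 'I_n.+1) : valid_letter n i ->
  (sgen n i x : nat) = if x == i.-1 :> nat then i else if x == i :> nat then i.-1 else x.
Proof.
rewrite /valid_letter /sgen => Vi.
have val_inord j : j <= n -> (inord j : 'I_n.+1) = j :> nat by move=> ?; rewrite inordK.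
case: tpermP => [->|->|/eqP x_ne1 /eqP x_ne2]; rewrite ?val_inord; try lia.
- by rewrite eqxx.
- by rewrite eqxx; case: eqP; lia.
- by rewrite -!val_eqE /= !val_inord in x_ne1 x_ne2; try lia; rewrite (negbTE x_ne1) (negbTE x_ne2).
Qed.

Lemma sgen2 i : sgen n i * sgen n i = 1.
Proof. exact: tperm2. Qed.

Lemma ltn_sgen i (a b : 'I_n.+1) : valid_letter n i -> a != b ->
  ~~ ((a == i.-1 :> nat) && (b == i :> nat)) -> ~~ ((a == i :> nat) && (b == i.-1 :> nat)) ->
  (sgen n i a < sgen n i b) = (a < b).
Proof.
move=> Vi a_ne_b; rewrite !sgenE //; move: Vi a_ne_b; rewrite /valid_letter.
case: a b => a ? [b ?] /=; rewrite -val_eqE /=.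
by do ! case: eqP => /=; move=> *; apply/idP/idP; lia.
Qed.

Definition inv_set (w : 'S_n.+1) :=
  [set p : 'I_n.+1 * 'I_n.+1 | (p.1 < p.2) && (w p.2 < w p.1)].

Lemma lenE (w : 'S_n.+1) : len w = #|inv_set w|.
Proof. by []. Qed.

(* [w * sgen n i] is s_i \o w: it exchanges the values i - 1 and i of w. *)
Lemma len_sgen_up (w : 'S_n.+1) i (p q : 'I_n.+1) : valid_letter n i ->
  (w p : nat) = i.-1 -> (w q : nat) = i -> p < q -> len (w * sgen n i) = (len w).+1.
Proof.
move=> Vi wp wq p_lt_q; have i_in : 0 < i <= n := Vi.
rewrite !lenE; suff -> : inv_set (w * sgen n i) = (p, q) |: inv_set w.
  by rewrite cardsU1 inE /= wp wq (_ : i < i.-1 = false) ?andbF; lia.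
apply/setP => [[x1 x2]]; rewrite !inE /= !permM.
have [[-> ->]|ne] := eqVneq (x1, x2) (p, q).
  by rewrite p_lt_q /= !sgenE // wp wq; do ! case: eqP; lia.
case: (ltnP x1 x2) => //= x_lt; apply: ltn_sgen => //.
- by apply/eqP => /perm_inj E; move: x_lt; rewrite E ltnn.
- apply/negP => /andP[/eqP w2 /eqP w1].
  have ? : x2 = p by apply: (perm_val_inj (w := w)); lia.
  have ? : x1 = q by apply: (perm_val_inj (w := w)); lia.
  by subst; lia.
- apply/negP => /andP[/eqP w2 /eqP w1].
  have ? : x2 = q by apply: (perm_val_inj (w := w)); lia.
  have ? : x1 = p by apply: (perm_val_inj (w := w)); lia.
  by subst; rewrite eqxx in ne.
Qed.

Lemma len_sgen_down (w : 'S_n.+1) i (p q : 'I_n.+1) : valid_letter n i ->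
  (w p : nat) = i.-1 -> (w q : nat) = i -> q < p -> (len (w * sgen n i)).+1 = len w.
Proof.
move=> Vi wp wq q_lt_p; have i_in : 0 < i <= n := Vi.
rewrite -(@len_sgen_up (w * sgen n i) i q p) -?mulgA ?sgen2 ?mulg1 // !permM !sgenE // ?wp ?wq;
  by do ! case: eqP; lia.
Qed.

Lemma len_sgen_le (w : 'S_n.+1) i : valid_letter n i -> len (w * sgen n i) <= (len w).+1.
Proof.
move=> Vi; have i_in : 0 < i <= n := Vi.
have [p wp] : exists p : 'I_n.+1, (w p : nat) = i.-1 by apply: perm_attains; lia.
have [q wq] : exists q : 'I_n.+1, (w q : nat) = i by apply: perm_attains; lia.
case: (ord_trichotomy p q) => [p_lt|q_lt|p_eq].
- by rewrite (len_sgen_up Vi wp wq p_lt).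
- by have := len_sgen_down Vi wp wq q_lt; lia.
- by move: wp wq; rewrite p_eq; lia.
Qed.

Lemma len1 : len (1 : 'S_n.+1) = 0.
Proof.
apply/eqP; rewrite lenE cards_eq0; apply/eqP/setP => -[x y].
by rewrite !inE /= !perm1; apply/negP => /andP[]; lia.
Qed.

Lemma len_wordperm_le l : all (valid_letter n) l -> len (wordperm n l) <= size l.
Proof.
elim: l => [|i l IH] /=; first by rewrite len1.
by case/andP=> Vi Vl; apply: leq_trans (len_sgen_le _ Vi) _; rewrite ltnS IH.
Qed.

Lemma wordperm_cons i l : wordperm n (i :: l) = wordperm n l * sgen n i.
Proof. by []. Qed.

Lemma reduced_word_cons i l (w : 'S_n.+1) : reduced_word (i :: l) w ->
  [/\ reduced_word l (wordperm n l), w = wordperm n l * sgen n i &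
      exists2 p : 'I_n.+1, (wordperm n l p : nat) = i.-1 &
      exists2 q : 'I_n.+1, (wordperm n l q : nat) = i & p < q].
Proof.
case; rewrite wordperm_cons /= => /andP[Vi Vl] <- size_l; have i_in : 0 < i <= n := Vi.
have len_le := len_wordperm_le Vl.
have [p wp] : exists p : 'I_n.+1, (wordperm n l p : nat) = i.-1 by apply: perm_attains; lia.
have [q wq] : exists q : 'I_n.+1, (wordperm n l q : nat) = i by apply: perm_attains; lia.
case: (ord_trichotomy p q) => [p_lt|q_lt|p_eq].
- move: size_l; rewrite (len_sgen_up Vi wp wq p_lt) => -[size_l].
  by split => //; last by exists p => //; exists q.
- by have := len_sgen_down Vi wp wq q_lt; lia.
- by move: wp wq; rewrite p_eq; lia.
Qed.

Lemma pmax_sgen (w : 'S_n.+1) i (p q : 'I_n.+1) : valid_letter n i ->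
  (w p : nat) = i.-1 -> (w q : nat) = i -> p < q ->
  forall y, pmax (w * sgen n i) y = (if pmax w y == i.-1 then i else pmax w y).
Proof.
move=> Vi wp wq p_lt_q y; have i_in : 0 < i <= n := Vi.
have [z0 z0_le wz0] := pmax_attained w y.
have ub := @pmax_ub w y.
case: eqP => pm_eq; apply: pmax_char => [|z z_le]; rewrite ?permM ?sgenE //.
- by exists z0; rewrite // permM sgenE // wz0 pm_eq eqxx.
- by have := ub z z_le; do ! case: eqP; lia.
- have [pm_i|pm_ne_i] := eqVneq (pmax w y) i.
    exists p; last by rewrite permM sgenE // wp eqxx.
    have z0q : z0 = q by apply: (perm_val_inj (w := w)); lia.
    by subst z0; lia.
  exists z0; rewrite // permM sgenE // wz0.
  by move/eqP: pm_ne_i; do ! case: eqP; lia.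
- by have := ub z z_le; do ! case: eqP; lia.
Qed.

Lemma perm_incr_ge (w : 'S_n.+1) : {homo w : x y / x < y} -> forall x : 'I_n.+1, x <= w x.
Proof.
move=> w_incr; suff ge_k k (x : 'I_n.+1) : x = k :> nat -> k <= w x by move=> x; apply: ge_k.
elim: k x => [//|k IH] x x_eq.
have k_lt : k < n.+1 by rewrite -x_eq ltnW.
have := IH (Ordinal k_lt) erefl; have := w_incr (Ordinal k_lt) x; rewrite /= x_eq; lia.
Qed.

Lemma perm_incr_eq1 (w : 'S_n.+1) : {homo w : x y / x < y} -> w = 1.
Proof.
move=> w_incr; have wV_incr : {homo w^-1 : x y / x < y}.
  move=> x y x_lt; case: (ord_trichotomy (w^-1 x) (w^-1 y)) => // [y_lt|/perm_inj E].
    by have := w_incr _ _ y_lt; rewrite !permKV; lia.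
  by move: x_lt; rewrite E ltnn.
apply/permP => x; apply/val_inj/eqP; rewrite perm1 /= eqn_leq perm_incr_ge // andbT.
by have := perm_incr_ge wV_incr (w x); rewrite permK.
Qed.

Lemma len_eq0 (w : 'S_n.+1) : len w = 0 -> w = 1.
Proof.
rewrite lenE => /eqP; rewrite cards_eq0 => /eqP inv0; apply: perm_incr_eq1 => x y x_lt.
case: (ord_trichotomy (w x) (w y)) => // [wy_lt|/perm_inj E].
  have : (x, y) \in inv_set w by rewrite inE /= x_lt wy_lt.
  by rewrite inv0 inE.
by move: x_lt; rewrite E ltnn.
Qed.

Lemma exists_value_descent (w : 'S_n.+1) (x1 x2 : 'I_n.+1) : x1 < x2 -> w x2 < w x1 ->
  exists i, [/\ valid_letter n i &
    exists2 p : 'I_n.+1, (w p : nat) = i.-1 & exists2 q : 'I_n.+1, (w q : nat) = i & q < p].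
Proof.
move=> + w_lt; move: {2}(w x1 - (w x2).+1) (erefl (w x1 - (w x2).+1)) => d.
elim: d x1 x2 w_lt => [|d IH] x1 x2 w_lt d_eq x_lt.
  exists (w x1); split; first by have := ltn_ord (w x1); rewrite /valid_letter; lia.
  by exists x2; [lia|exists x1].
have [z wz] : exists z : 'I_n.+1, (w z : nat) = (w x2).+1.
  by apply: perm_attains; have := ltn_ord (w x1); lia.
case: (ord_trichotomy z x2) => [z_lt|x2_lt|z_eq].
- exists (w x2).+1; split; first by rewrite /valid_letter; have := ltn_ord (w x1); lia.
  by exists x2 => //; exists z.
- by apply: (IH x1 z); lia.
- by move: wz; rewrite z_eq; lia.
Qed.

Lemma reduced_word_exists (w : 'S_n.+1) : exists l, reduced_word l w.
Proof.
move: {2}(len w) (erefl (len w)) => k; elim: k w => [|k IH] w len_w.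
  by exists [::]; split; rewrite //= (len_eq0 len_w) ?len1.
have /set0Pn[[x1 x2]] : inv_set w != set0 by rewrite -card_gt0 -lenE len_w.
rewrite inE /= => /andP[x_lt w_lt].
have [i [Vi [p wp [q wq q_lt]]]] := exists_value_descent x_lt w_lt.
have len_ws : len (w * sgen n i) = k by have := len_sgen_down Vi wp wq q_lt; lia.
have [l [Vl wl size_l]] := IH _ len_ws.
exists (i :: l); split; first by rewrite /= Vi.
  by rewrite wordperm_cons wl -mulgA sgen2 mulg1.
by rewrite /= size_l len_ws len_w.
Qed.

Lemma all_valid_Psi l : all (valid_letter n) l -> all (valid_letter n) (Psi_word n l).
Proof. by rewrite all_map; apply: sub_all => i; rewrite /= /valid_letter; lia. Qed.

Lemma word_act_Psi l (w : 'S_n.+1) : reduced_word l w ->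
  forall y, y <= n -> word_act (Psi_word n l) y = n - pmax w (n - y).
Proof.
elim: l w => [|i l IH] w.
  by case=> _ <- _ y y_le; rewrite /= pmax1; lia.
move=> red_w y y_le; have Vi : valid_letter n i by case: red_w => /andP[].
case/reduced_word_cons: red_w => red_l -> [p wp [q wq p_lt]].
rewrite /= (IH _ red_l y y_le) (pmax_sgen Vi wp wq p_lt).
have := pmax_le (wordperm n l) (n - y); move: Vi.
by rewrite /valid_letter /hecke_act; do ! case: eqP; lia.
Qed.

End Permutations.

Lemma inG_pmax n (m : seq nat) (v w : 'S_n.+1) : all (valid_letter n) m -> inG m v ->
  inG m w <-> pmax w =1 pmax v.
Proof.
move=> Vm [lv [red_v cong_v]]; split.
- case=> lw [red_w cong_w]; apply/eq_pmaxP/forallP => y; apply/eqP.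
  have := Mcong_word_act (Mc_trans cong_w (Mc_sym cong_v)) (n - y).
  rewrite (word_act_Psi red_w) ?(word_act_Psi red_v) ?leq_subr //.
  by rewrite subKn ?leq_ord //; have := pmax_le w y; have := pmax_le v y; lia.
- move=> E; have [lw red_w] := reduced_word_exists w; exists lw; split => //.
  have [[Vv _ _] [Vw _ _]] := (red_v, red_w); apply: Mc_trans cong_v.
  apply: Mcong_of_word_act (all_valid_Psi Vw) (all_valid_Psi Vv) _ => y y_le.
  by rewrite (word_act_Psi red_w) ?(word_act_Psi red_v) ?E.
Qed.

Section Patterns.

Variable n : nat.

Lemma contains321P (w : 'S_n.+1) : contains_pattern w [:: 3; 2; 1] <->
  exists a b c : 'I_n.+1, [/\ a < b, b < c, w b < w a & w c < w b].
Proof.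
split.
- case=> idx [size_idx srt cmp]; case: idx size_idx srt cmp => [|a [|b [|c [|]]]] //= _.
  case/andP=> ab /andP[bc _] cmp.
  by exists a, b, c; split; [| |exact: (cmp 1 0)|exact: (cmp 2 1)].
- case=> a [b [c [ab bc ba cb]]]; exists [:: a; b; c]; split => //=; first by rewrite ab bc.
  by case=> [|[|[|?]]] // [|[|[|?]]] //= _ _; apply/idP/idP; lia.
Qed.

Lemma contains312P (w : 'S_n.+1) : contains_pattern w [:: 3; 1; 2] <->
  exists a b c : 'I_n.+1, [/\ a < b, b < c, w b < w c & w c < w a].
Proof.
split.
- case=> idx [size_idx srt cmp]; case: idx size_idx srt cmp => [|a [|b [|c [|]]]] //= _.
  case/andP=> ab /andP[bc _] cmp.
  by exists a, b, c; split; [| |exact: (cmp 1 2)|exact: (cmp 2 0)].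
- case=> a [b [c [ab bc bc' ca]]]; exists [:: a; b; c]; split => //=; first by rewrite ab bc.
  by case=> [|[|[|?]]] // [|[|[|?]]] //= _ _; apply/idP/idP; lia.
Qed.

Lemma first_diff_after (u v : 'S_n.+1) (x p : 'I_n.+1) :
  (forall y : 'I_n.+1, y < x -> u y = v y) -> u x != v x -> u p = v x -> x < p.
Proof.
move=> agree ne up; case: (ord_trichotomy x p) => // [p_lt|x_eq].
  have /perm_inj p_eq : v p = v x by rewrite -agree.
  by move: p_lt; rewrite p_eq ltnn.
by move: up; rewrite -x_eq => up; rewrite up eqxx in ne.
Qed.

Lemma first_diff_321 (u v : 'S_n.+1) (x : 'I_n.+1) : pmax u =1 pmax v ->
  avoids u [:: 3; 2; 1] -> (forall y : 'I_n.+1, y < x -> u y = v y) -> u x <= v x.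
Proof.
move=> E avoid agree; rewrite leqNgt; apply/negP => vx_lt.
have ne : u x != v x by rewrite neq_ltn vx_lt orbT.
have [p /val_inj up] := perm_attains u (leq_ord (v x)).
have x_lt := first_diff_after agree ne up.
have [r r_le ur] := pmax_attained u x.
case: (ord_trichotomy r x) => [r_lt|x_lt'|r_eq].
- apply: avoid; apply/contains321P; exists r, x, p; split => //; last by rewrite up.
  have := pmax_ub u (leqnn x); rewrite -ur leq_eqVlt => /orP[/eqP/perm_val_inj r_x|//].
  by move: r_lt; rewrite r_x ltnn.
- by move: r_le; rewrite leqNgt x_lt'.
- have [z z_le vz] := pmax_attained v x; rewrite -E -ur r_eq in vz.
  case: (ord_trichotomy z x) => [z_lt|x_lt'|z_eq].
  + have /perm_val_inj z_x : (u z : nat) = u x by rewrite agree.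
    by move: z_lt; rewrite z_x ltnn.
  + by move: z_le; rewrite leqNgt x_lt'.
  + by move: vz vx_lt; rewrite z_eq => ->; rewrite ltnn.
Qed.

Lemma first_diff_312 (u v : 'S_n.+1) (x : 'I_n.+1) : pmax u =1 pmax v ->
  avoids v [:: 3; 1; 2] -> (forall y : 'I_n.+1, y < x -> u y = v y) -> u x <= v x.
Proof.
move=> E avoid agree; rewrite leqNgt; apply/negP => vx_lt.
have ne : v x != u x by rewrite neq_ltn vx_lt.
have [p /val_inj vp] := perm_attains v (leq_ord (u x)).
have x_lt := first_diff_after (fun y y_lt => esym (agree y y_lt)) ne vp.
have [r r_le vr] := pmax_attained v x; rewrite -E in vr.
have ux_le := pmax_ub u (leqnn x); rewrite -vr in ux_le.
case: (ord_trichotomy r x) => [r_lt|x_lt'|r_eq].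
- apply: avoid; apply/contains312P; exists r, x, p; split => //; first by rewrite vp.
  rewrite vp ltn_neqAle ux_le andbT; apply/eqP; rewrite -agree // => /perm_val_inj x_r.
  by move: r_lt; rewrite x_r ltnn.
- by move: r_le; rewrite leqNgt x_lt'.
- by move: ux_le vx_lt; rewrite r_eq; lia.
Qed.

Lemma eq_perm_first_diff (u v : 'S_n.+1) :
  (forall x : 'I_n.+1, (forall y : 'I_n.+1, y < x -> u y = v y) -> u x <= v x) ->
  (forall x : 'I_n.+1, (forall y : 'I_n.+1, y < x -> v y = u y) -> v x <= u x) ->
  u = v.
Proof.
move=> uv vu; suff agree k (x : 'I_n.+1) : x < k -> u x = v x.
  by apply/permP => x; apply: (agree n.+1).
elim: k x => [//|k IH] x; rewrite ltnS leq_eqVlt => /orP[/eqP x_eq|]; last exact: IH.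
have below (y : 'I_n.+1) : y < x -> u y = v y by rewrite x_eq; apply: IH.
by apply/val_inj/eqP; rewrite eqn_leq (uv x below) vu // => y /below ->.
Qed.

Lemma avoid321_uniq (u v : 'S_n.+1) : pmax u =1 pmax v ->
  avoids u [:: 3; 2; 1] -> avoids v [:: 3; 2; 1] -> u = v.
Proof.
move=> E Au Av; apply: eq_perm_first_diff => x; first exact: first_diff_321.
by apply: first_diff_321 => // y; rewrite E.
Qed.

Lemma avoid312_uniq (u v : 'S_n.+1) : pmax u =1 pmax v ->
  avoids u [:: 3; 1; 2] -> avoids v [:: 3; 1; 2] -> u = v.
Proof.
move=> E Au Av; apply: eq_perm_first_diff => x; first exact: first_diff_312.
by apply: first_diff_312 => // y; rewrite E.
Qed.

End Patterns.

Lemma card_pair_set (T : finType) (P : T -> T -> bool) :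
  #|[set pr : T * T | P pr.1 pr.2]| = \sum_(y : T) #|[set z | P y z]|.
Proof.
rewrite -sum1_card (eq_bigr (fun y => \sum_(z in [set z | P y z]) 1)); last first.
  by move=> y _; rewrite sum1_card.
by rewrite pair_big_dep; apply: eq_bigl => -[x y]; rewrite !inE.
Qed.

Section LengthBounds.

Variable n : nat.

Definition record (w : 'S_n.+1) (y : 'I_n.+1) : bool := (w y : nat) == pmax w y.

Definition tail_below (w : 'S_n.+1) (y : 'I_n.+1) : nat :=
  #|[set z : 'I_n.+1 | (y < z) && (w z < pmax w y)]|.

Definition below_pmax_pairs (w : 'S_n.+1) :=
  [set pr : 'I_n.+1 * 'I_n.+1 | (pr.1 < pr.2) && (w pr.2 < pmax w pr.1)].

Definition record_inversions (w : 'S_n.+1) :=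
  [set pr : 'I_n.+1 * 'I_n.+1 | record w pr.1 && ((pr.1 < pr.2) && (w pr.2 < pmax w pr.1))].

Lemma recordE (w : 'S_n.+1) y :
  record w y = [forall z : 'I_n.+1, (z < y) ==> (pmax w z < pmax w y)].
Proof.
apply/eqP/forallP => [wy z|pmax_lt].
- apply/implyP => z_lt; have [x x_le <-] := pmax_attained w z.
  have := pmax_ub w (leq_trans x_le (ltnW z_lt)); rewrite -wy ltn_neqAle => ->; rewrite andbT.
  by apply/eqP => /perm_val_inj x_y; move: z_lt x_le; rewrite x_y; lia.
- have [x x_le wx] := pmax_attained w y.
  case: (ord_trichotomy x y) => [x_lt|y_lt|x_eq].
  + by have := implyP (pmax_lt x) x_lt; have := pmax_ub w (leqnn x); lia.
  + by move: x_le; rewrite leqNgt y_lt.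
  + by rewrite -{1}x_eq.
Qed.

Lemma eq_pmax_record (u v : 'S_n.+1) y : pmax u =1 pmax v -> record u y = record v y.
Proof. by move=> E; rewrite !recordE; apply: eq_forallb => z; rewrite !E. Qed.

Lemma card_perm_lt (w : 'S_n.+1) P :
  #|[set z : 'I_n.+1 | w z < P]| = #|[set x : 'I_n.+1 | x < P]|.
Proof.
rewrite -[RHS](card_preimset _ (@perm_inj _ w)).
by apply: eq_card => z; rewrite !inE.
Qed.

Lemma card_prefix_below_pmax (w : 'S_n.+1) (y : 'I_n.+1) :
  #|[set z : 'I_n.+1 | (z <= y) && (w z < pmax w y)]|.+1 = #|[set z : 'I_n.+1 | z <= y]|.
Proof.
have [r r_le wr] := pmax_attained w y.
suff -> : [set z : 'I_n.+1 | z <= y] = r |: [set z : 'I_n.+1 | (z <= y) && (w z < pmax w y)].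
  by rewrite cardsU1 inE wr ltnn andbF.
apply/setP => z; rewrite !inE; have [->|z_ne] := eqVneq z r; first by rewrite r_le.
case: (leqP z y) => //= z_le; rewrite ltn_neqAle pmax_ub // andbT -wr.
by symmetry; apply/eqP => /perm_val_inj z_r; rewrite z_r eqxx in z_ne.
Qed.

Lemma eq_pmax_tail_below (u v : 'S_n.+1) y : pmax u =1 pmax v -> tail_below u y = tail_below v y.
Proof.
have split_prefix (w : 'S_n.+1) : #|[set z : 'I_n.+1 | w z < pmax w y]| =
    #|[set z : 'I_n.+1 | (z <= y) && (w z < pmax w y)]| + tail_below w y.
  rewrite -(cardsID [set z : 'I_n.+1 | z <= y]); congr (_ + _); apply: eq_card => z;
    by rewrite !inE -?ltnNge andbC.
move=> E; have := split_prefix u; have := split_prefix v.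
have := card_prefix_below_pmax u y; have := card_prefix_below_pmax v y.
by rewrite !card_perm_lt E; lia.
Qed.

Lemma card_below_pmax_pairs (w : 'S_n.+1) : #|below_pmax_pairs w| = \sum_y tail_below w y.
Proof. exact: (card_pair_set (fun y z : 'I_n.+1 => (y < z) && (w z < pmax w y))). Qed.

Lemma card_record_inversions (w : 'S_n.+1) :
  #|record_inversions w| = \sum_(y | record w y) tail_below w y.
Proof.
rewrite (card_pair_set (fun y z : 'I_n.+1 => record w y && ((y < z) && (w z < pmax w y)))) [RHS]big_mkcond.
apply: eq_bigr => y _; case: (record w y); last by apply/eqP; rewrite cards_eq0.
by apply: eq_card => z; rewrite !inE.
Qed.

Lemma inv_set_sub_below_pmax (w : 'S_n.+1) : inv_set w \subset below_pmax_pairs w.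
Proof.
apply/subsetP => -[y z]; rewrite !inE /= => /andP[y_lt wz_lt].
by rewrite y_lt (leq_trans wz_lt) ?pmax_ub.
Qed.

Lemma record_inversions_sub (w : 'S_n.+1) : record_inversions w \subset inv_set w.
Proof. by apply/subsetP => -[y z]; rewrite !inE /= => /and3P[/eqP <- -> ->]. Qed.

Lemma below_pmax_sub_inv_set (u : 'S_n.+1) :
  avoids u [:: 3; 1; 2] -> below_pmax_pairs u \subset inv_set u.
Proof.
move=> avoid; apply/subsetP => -[y z]; rewrite !inE /= => /andP[y_lt uz_lt]; rewrite y_lt /=.
case: (ord_trichotomy (u y) (u z)) => [uy_lt|//|/perm_inj y_z]; last first.
  by move: y_lt; rewrite y_z ltnn.
have [r r_le ur] := pmax_attained u y.
case: (ord_trichotomy r y) => [r_lt|y_lt'|r_y].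
- by case: avoid; apply/contains312P; exists r, y, z; rewrite ur.
- by move: r_le; rewrite leqNgt y_lt'.
- by move: uy_lt uz_lt; rewrite -ur r_y; lia.
Qed.

Lemma inv_set_sub_record_inversions (u : 'S_n.+1) :
  avoids u [:: 3; 2; 1] -> inv_set u \subset record_inversions u.
Proof.
move=> avoid; apply/subsetP => -[y z]; rewrite !inE /= => /andP[y_lt uz_lt].
have [r r_le ur] := pmax_attained u y.
case: (ord_trichotomy r y) => [r_lt|y_lt'|r_y].
- have := pmax_ub u (leqnn y); rewrite -ur leq_eqVlt => /orP[/eqP/perm_val_inj y_r|uy_lt].
    by move: r_lt; rewrite y_r ltnn.
  by case: avoid; apply/contains321P; exists r, y, z.
- by move: r_le; rewrite leqNgt y_lt'.
- by rewrite /record -ur r_y eqxx y_lt.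
Qed.

Lemma len_avoid312_max (u v : 'S_n.+1) : pmax u =1 pmax v ->
  avoids u [:: 3; 1; 2] -> len v <= len u.
Proof.
move=> E avoid; rewrite !lenE.
apply: leq_trans (subset_leq_card (inv_set_sub_below_pmax v)) _.
rewrite card_below_pmax_pairs -(eq_bigr _ (fun y _ => eq_pmax_tail_below y E)).
by rewrite -card_below_pmax_pairs subset_leq_card ?below_pmax_sub_inv_set.
Qed.

Lemma len_avoid321_min (u v : 'S_n.+1) : pmax u =1 pmax v ->
  avoids u [:: 3; 2; 1] -> len u <= len v.
Proof.
move=> E avoid; rewrite !lenE.
apply: leq_trans (subset_leq_card (inv_set_sub_record_inversions avoid)) _.
rewrite card_record_inversions (eq_bigl _ _ (fun y => eq_pmax_record y E)).
rewrite (eq_bigr _ (fun y _ => eq_pmax_tail_below y E)) -card_record_inversions.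
exact/subset_leq_card/record_inversions_sub.
Qed.

End LengthBounds.

Section Existence.

Variable n : nat.

Definition wsum (w : 'S_n.+1) : nat := \sum_(x : 'I_n.+1) x * w x.

Lemma wsum_tperm (w : 'S_n.+1) (b c : 'I_n.+1) : b < c -> w c < w b ->
  wsum w < wsum (tperm b c * w)%g.
Proof.
move=> b_lt wc_lt; have c_ne : c != b by rewrite neq_ltn b_lt orbT.
have split2 (w' : 'S_n.+1) :
    wsum w' = b * w' b + (c * w' c + \sum_(x | (x != b) && (x != c)) x * w' x).
  by rewrite /wsum (bigD1 b) // (bigD1 c).
rewrite !split2 !permM tpermL tpermR.
under [\sum_(x | _) _ in X in _ < X]eq_bigr => x /andP[x_ne_b x_ne_c] do rewrite permM tpermD 1?eq_sym //.
nia.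
Qed.
Lemma pmax_tperm (w : 'S_n.+1) (a b c : 'I_n.+1) : a < b -> b < c -> w b < w a -> w c < w a ->
  pmax (tperm b c * w)%g =1 pmax w.
Proof.
move=> a_lt b_lt wb_lt wc_lt y; have ub := @pmax_ub _ w y.
have [z0 z0_le wz0] := pmax_attained w y.
have not_max (d : 'I_n.+1) : a < d -> w d < w a -> d != z0.
  move=> a_lt_d wd_lt; apply/eqP => d_z0; move: z0_le (ub a); rewrite -wz0 -d_z0; lia.
apply: pmax_char => [|z z_le].
  by exists z0; rewrite // permM tpermD ?not_max //; apply: ltn_trans b_lt.
rewrite permM; case: tpermP => [z_b|z_c|_ _]; last exact: ub.
  have [c_le|y_lt] := leqP c y; first exact: ub.
  by move: z_le (ub a); rewrite z_b; lia.
by apply: ub; move: z_le; rewrite z_c; lia.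
Qed.

Lemma exists_avoid321 (v : 'S_n.+1) :
  exists2 u : 'S_n.+1, pmax u =1 pmax v & avoids u [:: 3; 2; 1].
Proof.
case: (@arg_maxnP _ v [pred w : 'S_n.+1 | [forall y : 'I_n.+1, pmax w y == pmax v y]] wsum)
  => [|u /eq_pmaxP Euv u_max]; first exact/eq_pmaxP.
exists u => // /contains321P[a [b [c [a_lt b_lt ub_lt uc_lt]]]].
have E := pmax_tperm a_lt b_lt ub_lt (ltn_trans uc_lt ub_lt).
have := u_max _ (introT (eq_pmaxP _ _) (fun y => etrans (E y) (Euv y))).
by move/(leq_trans (wsum_tperm b_lt uc_lt)); rewrite ltnn.
Qed.

Lemma exists_avoid312 (v : 'S_n.+1) :
  exists2 u : 'S_n.+1, pmax u =1 pmax v & avoids u [:: 3; 1; 2].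
Proof.
case: (@arg_minnP _ v [pred w : 'S_n.+1 | [forall y : 'I_n.+1, pmax w y == pmax v y]] wsum)
  => [|u /eq_pmaxP Euv u_min]; first exact/eq_pmaxP.
exists u => // /contains312P[a [b [c [a_lt b_lt ub_lt uc_lt]]]].
pose w := (tperm b c * u)%g.
have [wb wc] : w b = u c /\ w c = u b by rewrite !permM tpermL tpermR.
have u_w : (tperm b c * w)%g = u by rewrite mulgA tperm2 mul1g.
have wa : w a = u a.
  by rewrite permM tpermD // neq_ltn ?a_lt ?(ltn_trans a_lt b_lt) orbT.
have E : pmax u =1 pmax w.
  by rewrite -{1}u_w; apply: pmax_tperm a_lt b_lt _ _; rewrite wa ?wb ?wc // (ltn_trans ub_lt).
have := u_min w (introT (eq_pmaxP _ _) (fun y => etrans (esym (E y)) (Euv y))).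
by rewrite -{1}u_w leqNgt wsum_tperm // wb wc.
Qed.

End Existence.

Theorem mainTheorem2 (n : nat) (m : seq nat) :
  all (valid_letter n) m ->
  (exists w : 'S_n.+1, inG m w) ->
  (exists! u : 'S_n.+1, inG m u /\ avoids u [:: 3; 2; 1]) /\
  (forall u : 'S_n.+1, inG m u -> avoids u [:: 3; 2; 1] ->
     forall v : 'S_n.+1, inG m v -> len u <= len v) /\
  (exists! u : 'S_n.+1, inG m u /\ avoids u [:: 3; 1; 2]) /\
  (forall u : 'S_n.+1, inG m u -> avoids u [:: 3; 1; 2] ->
     forall v : 'S_n.+1, inG m v -> len v <= len u).
Proof.
move=> Vm [w0 w0_in].
have inGE w : inG m w <-> pmax w =1 pmax w0 := inG_pmax w Vm w0_in.
have same_pmax (u v : 'S_n.+1) : inG m u -> inG m v -> pmax u =1 pmax v.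
  by move=> /(inGE u) Eu /(inGE v) Ev y; rewrite Eu Ev.
split; [|split; [|split]].
- have [u /(proj2 (inGE u)) u_in Au] := exists_avoid321 w0.
  exists u; split=> // u' [u'_in Au'].
  exact: avoid321_uniq (same_pmax _ _ u_in u'_in) Au Au'.
- by move=> u u_in Au v v_in; apply: len_avoid321_min (same_pmax _ _ u_in v_in) Au.
- have [u /(proj2 (inGE u)) u_in Au] := exists_avoid312 w0.
  exists u; split=> // u' [u'_in Au'].
  exact: avoid312_uniq (same_pmax _ _ u_in u'_in) Au Au'.
- by move=> u u_in Au v v_in; apply: len_avoid312_max (same_pmax _ _ u_in v_in) Au.
Qed.
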